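(* Let $p(x)=x^3-a_2x^2+a_1x-a_0$ with real coefficients $a_0,a_1,a_2>0$, and let $\alpha=\min\{a_2,a_0/a_1\}$ and $\beta=\max\{a_2,a_0/a_1\}$. Then $p(x)<0$ for all $x\in(0,\alpha)$ and $p(x)>0$ for all $x>\beta$. *)

From Stdlib Require Import Reals.
Open Scope R_scope.

(** Since [a0 = a1 * (a0 / a1)], the cubic splits as
    [p x = x^2 (x - a2) + a1 (x - a0/a1)].  Both summands are negative when
    [x] lies below [a2] and [a0/a1], and positive when [x] lies above both. *)

From Stdlib Require Import Reals Lra Psatz.
Open Scope R_scope.

Lemma cubic_split (a0 a1 a2 x : R) : a1 <> 0 ->
  x ^ 3 - a2 * x ^ 2 + a1 * x - a0 = x ^ 2 * (x - a2) + a1 * (x - a0 / a1).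
Proof. intro Ha1; field; exact Ha1. Qed.

Lemma split_cubic_neg (a b c x : R) : 0 < a -> x < b -> x < c ->
  x ^ 2 * (x - b) + a * (x - c) < 0.
Proof.
  intros Ha Hb Hc.
  assert (Hx2 : 0 <= x ^ 2) by (apply pow2_ge_0).
  nra.
Qed.

Lemma split_cubic_pos (a b c x : R) : 0 < a -> b < x -> c < x ->
  0 < x ^ 2 * (x - b) + a * (x - c).
Proof.
  intros Ha Hb Hc.
  assert (Hx2 : 0 <= x ^ 2) by (apply pow2_ge_0).
  nra.
Qed.

Theorem lemma2 (a0 a1 a2 : R) (h0 : 0 < a0) (h1 : 0 < a1) (h2 : 0 < a2) :
  let p := fun x : R => x ^ 3 - a2 * x ^ 2 + a1 * x - a0 in
  let alpha := Rmin a2 (a0 / a1) in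
  let beta := Rmax a2 (a0 / a1) in
  (forall x : R, 0 < x < alpha -> p x < 0) /\
  (forall x : R, beta < x -> 0 < p x).
Proof.
  intros p alpha beta; unfold p, alpha, beta.
  split.
  - intros x [_ Hx].
    apply Rmin_Rgt in Hx as [Hb Hc].
    rewrite cubic_split by lra.
    now apply split_cubic_neg.
  - intros x Hx.
    apply Rmax_Rlt in Hx as [Hb Hc].
    rewrite cubic_split by lra.
    now apply split_cubic_pos.
Qed.
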